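(* Fix one of the ground state sequences (A) or (B) and $m\in\mathbb Z$. Let $b\in B_{\mathrm{aff}}$ satisfy $H(b\otimes b^\circ_m)\le0$. Then $G(b)\wedge|m\rangle=0$ in the Fock space $\mathcal F_{m-1}$ (i.e. the image in $\mathcal F_{m-1}$ of $G(b)\wedge\overline{|m\rangle}\in\bar{\mathcal F}_{m-1}$ vanishes; equivalently $G(b)\wedge\overline{|m\rangle}\in\bigcap_{n>0}q^nL(\bar{\mathcal F}_{m-1})$).
   Context: Let $\mathfrak g=\widehat{\mathfrak{sl}}_2$, $I=\{0,1\}$, weight lattice $P=\mathbb Z\Lambda_0\oplus\mathbb Z\Lambda_1\oplus\mathbb Z\delta$, coroots $h_0,h_1$ with $\langle h_i,\Lambda_j\rangle=\delta_{ij}$, $\langle h_i,\delta\rangle=0$, central element $c=h_0+h_1$. $U_q(\mathfrak g)$ is the quantum affine algebra over $\mathbb Q(q)$ with generators $e_i,f_i$ ($i\in I$), $q^h$ ($h\in P^*$), $t_i=q^{h_i}$, and coproduct $\Delta(q^h)=q^h\otimes q^h$, $\Delta(e_i)=e_i\otimes1+t_i^{-1}\otimes e_i$, $\Delta(f_i)=f_i\otimes t_i+1\otimes f_i$. $[n]=(q^n-q^{-n})/(q-q^{-1})$; $A\subset\mathbb Q(q)$ is the ring of rational functions regular at $q=0$. Let $J=\{0,1,2\}$. $V_{\mathrm{aff}}$ is the $\mathbb Q(q)$-space with basis $z^av_j$ ($a\in\mathbb Z$, $j\in J$), a $U_q(\mathfrak g)$-module via: $\mathrm{wt}(z^av_j)=2(1-j)(\Lambda_1-\Lambda_0)+a\delta$,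 $q^hz^av_j=q^{\langle h,\mathrm{wt}(z^av_j)\rangle}z^av_j$, $e_1z^av_j=[3-j]z^av_{j-1}$, $f_1z^av_j=[j+1]z^av_{j+1}$, $e_0z^av_j=[j+1]z^{a+1}v_{j+1}$, $f_0z^av_j=[3-j]z^{a-1}v_{j-1}$ (with $v_{-1}=v_3=0$). The operator $z^b$ sends $z^av_j\mapsto z^{a+b}v_j$. The crystal of $V_{\mathrm{aff}}$ is $B_{\mathrm{aff}}=\{z^ab_j\}$ with lower global base $G(z^ab_j)=z^av_j$; the energy function is $H(z^ab_i\otimes z^{a'}b_j)=\min\{i,2-j\}-a+a'$. $N\subset V_{\mathrm{aff}}\otimes V_{\mathrm{aff}}$ is the smallest subspace containing $v_0\otimes v_0$ that is stable under the action of $U_q(\mathfrak g)$ (via $\Delta$) and under the operators $z\otimes z$, $z^{-1}\otimes z^{-1}$, $z\otimes1+1\otimes z$. For $n\ge2$, $N_n=\sum_{r=0}^{n-2}V_{\mathrm{aff}}^{\otimes r}\otimes N\otimes V_{\mathrm{aff}}^{\otimes(n-r-2)}$, $\bigwedge^nV_{\mathrm{aff}}:=V_{\mathrm{aff}}^{\otimes n}/N_n$, and $L(\bigwedge^nV_{\mathrm{aff}})$ is the image of the $A$-lattice spanned by all $G(c_1)\otimes\cdots\otimes G(c_n)$, $c_r\in B_{\mathrm{aff}}$. Ground state sequences: (A) $b^\circ_m=zb_2$ for $m$ even, $b^\circ_m=b_0$ for $m$ odd; (B) $b^\circ_m=b_1$ for all $m$. Put $v^\circ_m=G(b^\circ_m)$.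 The pre-Fock space $\bar{\mathcal F}_m$ is the inductive limit of the spaces $\bigwedge^rV_{\mathrm{aff}}$ ($r\ge0$) along the maps $u\mapsto u\wedge v^\circ_{m+r}$; the image of $u\in\bigwedge^rV_{\mathrm{aff}}$ is written $u\wedge\overline{|m+r\rangle}$ (the formal semi-infinite wedge $u\wedge v^\circ_{m+r}\wedge v^\circ_{m+r+1}\wedge\cdots$), and $\overline{|m\rangle}$ is the image of $1\in\bigwedge^0V_{\mathrm{aff}}=\mathbb Q(q)$. $L(\bar{\mathcal F}_m)$ is the $A$-span of the images of the $L(\bigwedge^rV_{\mathrm{aff}})$. The Fock space is $\mathcal F_m=\bar{\mathcal F}_m/\bigcap_{n>0}q^nL(\bar{\mathcal F}_m)$, $|m\rangle$ is the image of $\overline{|m\rangle}$, $L(\mathcal F_m)$ is the image of $L(\bar{\mathcal F}_m)$, and $\mathcal F_m$ carries the $q$-adic topology with neighborhood basis of $0$ given by $\{q^nL(\mathcal F_m)\}_{n\ge0}$ (it is separated). *)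

From HB Require Import structures.
From mathcomp Require Import all_boot all_order all_algebra.
Set Implicit Arguments. Unset Strict Implicit. Unset Printing Implicit Defensive.
Import Order.TTheory GRing.Theory Num.Theory.
Local Open Scope ring_scope.

Definition K : fieldType := {fraction {poly rat}}.
Definition tofr (p : {poly rat}) : K := @FracField.tofrac _ p.
Local Notation "x %:F" := (tofr x).
Definition q : K := (('X : {poly rat}))%:F.

Definition qint (n : int) : K := (q ^ n - q ^ (- n)) / (q - q^-1).

Definition inA (f : K) : Prop :=
  exists (p r : {poly rat}), r.[0] != 0 /\ f = p%:F / r%:F.

(* Basis of V_aff: z^a v_j  <->  (a, j), a : int, j : J = {0,1,2}.
   As crystal elements this is also z^a b_j, with G(z^a b_j) = z^a v_j. *)
Definition bas := (int * 'I_3)%type.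
Definition word := seq bas.
(* Vectors: formal K-linear combinations of basis words (tensor elements). *)
Definition Vec := seq (K * word).

Definition coef (v : Vec) (w : word) : K := \sum_(p <- v | p.2 == w) p.1.
Definition veq (v v' : Vec) : Prop := forall w, coef v w = coef v' w.
Definition scale (c : K) (v : Vec) : Vec := [seq (c * p.1, p.2) | p <- v].
Definition vsum (l : seq Vec) : Vec := flatten l.
Definition linext (F : word -> Vec) (v : Vec) : Vec :=
  flatten [seq scale p.1 (F p.2) | p <- v].

(* Weights: wt(z^a v_j) = 2(1-j)(Lambda_1 - Lambda_0) + a delta, recorded by its
   coordinates on (Lambda_0, Lambda_1, delta). *)
Definition wt (b : bas) : int * int * int :=
  let j := (nat_of_ord b.2)%:Z in (- (2 * (1 - j)), 2 * (1 - j), b.1).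
Definition wtw (w : word) : int * int * int :=
  foldr (fun b s => (((wt b).1.1 + s.1.1), ((wt b).1.2 + s.1.2), ((wt b).2 + s.2)))
        (0, 0, 0) w.
(* P^* = Z h_0 + Z h_1 + Z d (dual basis to Lambda_0, Lambda_1, delta);
   h = (c0, c1, cd) stands for c0 h_0 + c1 h_1 + cd d. *)
Definition pair (h wt : int * int * int) : int :=
  h.1.1 * wt.1.1 + h.1.2 * wt.1.2 + h.2 * wt.2.
Definition hcor (i : bool) : int * int * int :=   (* i = false: h_0, true: h_1 *)
  if i then (0, 1, 0) else (1, 0, 0).

(* Action of e_i, f_i on one factor V_aff (i = false is 0, i = true is 1). *)
Definition e_one (i : bool) (b : bas) : seq (K * bas) :=
  let a := b.1 in let j := nat_of_ord b.2 in
  if i then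
    (if (0 < j)%N then [:: (qint (3 - j)%N, (a, inord j.-1))] else [::])
  else
    (if (j < 2)%N then [:: (qint j.+1, (a + 1, inord j.+1))] else [::]).
Definition f_one (i : bool) (b : bas) : seq (K * bas) :=
  let a := b.1 in let j := nat_of_ord b.2 in
  if i then
    (if (j < 2)%N then [:: (qint j.+1, (a, inord j.+1))] else [::])
  else
    (if (0 < j)%N then [:: (qint (3 - j)%N, (a - 1, inord j.-1))] else [::]).

(* Action on tensor products through the (iterated) coproduct
   Delta(e_i) = e_i (x) 1 + t_i^-1 (x) e_i,  Delta(f_i) = f_i (x) t_i + 1 (x) f_i,
   Delta(q^h) = q^h (x) q^h. *)
Fixpoint actE (i : bool) (w : word) : Vec :=
  match w with
  | [::] => [::]
  | b :: w' => [seq (c.1, c.2 :: w') | c <- e_one i b] ++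
               [seq (q ^ (- pair (hcor i) (wt b)) * c.1, b :: c.2) | c <- actE i w']
  end.
Fixpoint actF (i : bool) (w : word) : Vec :=
  match w with
  | [::] => [::]
  | b :: w' => [seq (c.1 * q ^ (pair (hcor i) (wtw w')), c.2 :: w') | c <- f_one i b] ++
               [seq (c.1, b :: c.2) | c <- actF i w']
  end.
Definition actK (h : int * int * int) (w : word) : Vec := [:: (q ^ (pair h (wtw w)), w)].

Definition zsh (k : int) (b : bas) : bas := (b.1 + k, b.2).
Definition zz (k : int) (w : word) : Vec := [:: (1, map (zsh k) w)].
Definition zsum (w : word) : Vec :=
  match w with
  | [:: b1; b2] => [:: (1, [:: zsh 1 b1; b2]); (1, [:: b1; zsh 1 b2])]
  | _ => [::]
  end.

Definition subspace (S : Vec -> Prop) : Prop :=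
  [/\ S [::], (forall x y, S x -> S y -> S (x ++ y)),
      (forall c x, S x -> S (scale c x)) & (forall x y, veq x y -> S x -> S y)].

Definition stableN (S : Vec -> Prop) : Prop :=
  (forall i x, S x -> S (linext (actE i) x)) /\
  (forall i x, S x -> S (linext (actF i) x)) /\
  (forall h x, S x -> S (linext (actK h) x)) /\
  (forall x, S x -> S (linext (zz 1) x)) /\
  (forall x, S x -> S (linext (zz (-1)) x)) /\
  (forall x, S x -> S (linext zsum x)).

Definition v0v0 : Vec := [:: (1, [:: (0%R, ord0); (0%R, ord0)])].

Definition inN (x : Vec) : Prop :=
  forall S, subspace S -> S v0v0 -> stableN S -> S x.

(* N_n = sum_r V^{(x) r} (x) N (x) V^{(x) (n-r-2)}: spanned by beta (x) y (x) gamma. *)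
Definition tens3 (beta : word) (y : Vec) (gamma : word) : Vec :=
  [seq (p.1, beta ++ p.2 ++ gamma) | p <- y].
Definition inNn (n : nat) (x : Vec) : Prop :=
  exists l : seq (word * Vec * word),
    (forall p, p \in l -> inN p.1.2 /\ (size p.1.1 + 2 + size p.2 = n)%N) /\
    veq x (vsum [seq tens3 p.1.1 p.1.2 p.2 | p <- l]).

(* L(V^{(x) t}) : A-span of the G(c_1) (x) ... (x) G(c_t); its image is L(wedge^t). *)
Definition inLat (t : nat) (x : Vec) : Prop :=
  exists l : Vec, (forall p, p \in l -> inA p.1 /\ size p.2 = t) /\ veq x l.

Inductive gss := GA | GB.
Definition gstate (g : gss) (m : int) : bas :=
  match g with
  | GA => if odd `|m|%N then (0%R, ord0) else (1%R, inord 2)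
  | GB => (0%R, inord 1)
  end.

Definition energy (b b' : bas) : int :=
  (minn (nat_of_ord b.2) (2 - nat_of_ord b'.2))%:Z - b.1 + b'.1.

(* Transition map of the inductive system defining bar F_{m'}:
   wedge^r -> wedge^t, u |-> u /\ v°_{m'+r} /\ ... /\ v°_{m'+t-1}
   (on representatives in V^{(x) r}). *)
Definition gsword (g : gss) (k : int) (len : nat) : word :=
  [seq gstate g (k + i%:Z) | i <- iota 0 len].
Definition push (g : gss) (m' : int) (r t : nat) (u : Vec) : Vec :=
  [seq (p.1, p.2 ++ gsword g (m' + r%:Z) (t - r)) | p <- u].

(* The element of bar F_{m'} represented by u in V^{(x) r} (i.e. u /\ bar|m'+r>)
   lies in q^n L(bar F_{m'}): it equals q^n times an A-linear combination of
   images of elements of L(wedge^{r_k}), equality in the inductive limit meaning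
   equality in wedge^t = V^{(x) t}/N_t for some common level t. *)
Definition in_qnL (g : gss) (m' : int) (n : nat) (r : nat) (u : Vec) : Prop :=
  exists (l : seq (K * nat * Vec)) (t : nat),
    (r <= t)%N /\
    (forall p, p \in l -> [/\ inA p.1.1, (p.1.2 <= t)%N & inLat p.1.2 p.2]) /\
    inNn t (push g m' r t u ++
            scale (- q ^+ n) (vsum [seq scale p.1.1 (push g m' p.1.2 t p.2) | p <- l])).

Definition Gvec (b : bas) : Vec := [:: (1, [:: b])].

From mathcomp Require Import all_boot all_order all_algebra.
From mathcomp Require Import ring zify.
Set Implicit Arguments. Unset Strict Implicit. Unset Printing Implicit Defensive.
Import Order.TTheory GRing.Theory Num.Theory.
Local Open Scope ring_scope.

(* Write bm = b°_m. Whenever H(b ⊗ bm) <= 0, the relations in N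
   rewrite G(b) ⊗ G(bm) as an A-combination of G(b') ⊗ G(b'') with
   H(b'' ⊗ b°_(m+1)) <= 0 in which every term either has its coefficient in qA,
   or has -H(b'' ⊗ b°_(m+1)) < -H(b ⊗ bm).  For H = 0 these relations are
   obtained from explicit elements of N generated by v_0 ⊗ v_0; the operators
   z ⊗ 1 + 1 ⊗ z and z ⊗ z propagate them to every z^a b.  Applying the
   relation to the first two factors of G(b) ∧ G(b°_m) ∧ G(b°_(m+1)) ∧ ... and
   recursing on the tail (by induction on n, and inside on -H) shows that
   G(b) ∧ |m> lies in q^n L modulo N for every n. *)

Lemma coef_nil w : coef [::] w = 0.
Proof. by rewrite /coef big_nil. Qed.

Lemma coef_cons p v w : coef (p :: v) w = (if p.2 == w then p.1 else 0) + coef v w.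
Proof. by rewrite /coef big_cons; case: ifP => _; rewrite ?add0r. Qed.

Lemma coef_cat x y w : coef (x ++ y) w = coef x w + coef y w.
Proof. by rewrite /coef big_cat. Qed.

Lemma coef_scale c v w : coef (scale c v) w = c * coef v w.
Proof.
elim: v => [|p v IH]; first by rewrite /= !coef_nil mulr0.
by rewrite /= !coef_cons IH mulrDr /=; case: ifP => _; rewrite ?mulr0.
Qed.

Lemma coef_vsum (L : seq Vec) w : coef (vsum L) w = \sum_(x <- L) coef x w.
Proof.
elim: L => [|x L IH]; first by rewrite /= coef_nil big_nil.
by rewrite /vsum /= coef_cat big_cons -IH.
Qed.

Lemma linext_cons F p v : linext F (p :: v) = scale p.1 (F p.2) ++ linext F v.
Proof. by []. Qed.

Lemma linext_cat F x y : linext F (x ++ y) = linext F x ++ linext F y.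
Proof. by rewrite /linext map_cat flatten_cat. Qed.

Lemma coef_linext F v w : coef (linext F v) w = \sum_(p <- v) p.1 * coef (F p.2) w.
Proof.
elim: v => [|p v IH]; first by rewrite /linext /= coef_nil big_nil.
by rewrite linext_cons coef_cat coef_scale IH big_cons.
Qed.

Lemma veq_sym x y : veq x y -> veq y x. Proof. by move=> H w. Qed.

Lemma veq_trans x y z : veq x y -> veq y z -> veq x z.
Proof. by move=> H1 H2 w; rewrite H1. Qed.

Lemma veq_cat x y x' y' : veq x x' -> veq y y' -> veq (x ++ y) (x' ++ y').
Proof. by move=> H1 H2 w; rewrite !coef_cat H1 H2. Qed.

Lemma veq_scale c x y : veq x y -> veq (scale c x) (scale c y).
Proof. by move=> H w; rewrite !coef_scale H. Qed.

Lemma veq_scaleA c d x : veq (scale c (scale d x)) (scale (c * d) x).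
Proof. by move=> w; rewrite !coef_scale mulrA. Qed.

Lemma veq_subvv x : veq (x ++ scale (-1) x) [::].
Proof. by move=> w; rewrite coef_cat coef_scale coef_nil mulN1r subrr. Qed.

Lemma linext_scale F c V : veq (linext F (scale c V)) (scale c (linext F V)).
Proof.
move=> w; rewrite coef_scale !coef_linext big_map big_distrr /=.
by apply: eq_bigr => p _; rewrite mulrA.
Qed.

(** * The subspaces N and N_t *)

Lemma inN_v0v0 : inN v0v0. Proof. by move=> S _ H _. Qed.

Lemma inN_nil : inN [::]. Proof. by move=> S []. Qed.

Lemma inN_cat x y : inN x -> inN y -> inN (x ++ y).
Proof. by move=> Hx Hy S HS H0 Hst; case: (HS) => _ Hc _ _; apply: Hc; [apply: Hx | apply: Hy]. Qed.

Lemma inN_scale c x : inN x -> inN (scale c x).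
Proof. by move=> Hx S HS H0 Hst; case: (HS) => _ _ Hc _; apply: Hc; apply: Hx. Qed.

Lemma inN_veq x y : veq x y -> inN x -> inN y.
Proof. by move=> Hxy Hx S HS H0 Hst; case: (HS) => _ _ _ Hc; apply: Hc Hxy _; apply: Hx. Qed.

Lemma inN_actE i x : inN x -> inN (linext (actE i) x).
Proof. by move=> Hx S HS H0 Hst; case: (Hst) => H _; apply: H; apply: Hx. Qed.

Lemma inN_actF i x : inN x -> inN (linext (actF i) x).
Proof. by move=> Hx S HS H0 Hst; case: (Hst) => _ [H _]; apply: H; apply: Hx. Qed.

Lemma inN_zshift x : inN x -> inN (linext (zz 1) x).
Proof. by move=> Hx S HS H0 Hst; case: (Hst) => _ [_ [_ [H _]]]; apply: H; apply: Hx. Qed.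

Lemma inN_zunshift x : inN x -> inN (linext (zz (-1)) x).
Proof. by move=> Hx S HS H0 Hst; case: (Hst) => _ [_ [_ [_ [H _]]]]; apply: H; apply: Hx. Qed.

Lemma inN_zsum x : inN x -> inN (linext zsum x).
Proof. by move=> Hx S HS H0 Hst; case: (Hst) => _ [_ [_ [_ [_ H]]]]; apply: H; apply: Hx. Qed.

Lemma inNn_veq t x y : veq x y -> inNn t x -> inNn t y.
Proof. by move=> Hxy [l [Hl Hv]]; exists l; split => // w; rewrite -Hxy. Qed.

Lemma inNn_nil t : inNn t [::].
Proof. by exists [::]; split => // w; rewrite /= coef_nil. Qed.

Lemma inNn_cat t x y : inNn t x -> inNn t y -> inNn t (x ++ y).
Proof.
move=> [l1 [H1 V1]] [l2 [H2 V2]]; exists (l1 ++ l2); split.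
  by move=> p; rewrite mem_cat => /orP [/H1|/H2].
by move=> w; rewrite coef_cat V1 V2 map_cat /vsum flatten_cat coef_cat.
Qed.

Lemma tens3_scale c beta y gamma :
  tens3 beta (scale c y) gamma = scale c (tens3 beta y gamma).
Proof. by rewrite /tens3 /scale -!map_comp. Qed.

Lemma tens3_cat beta x y gamma :
  tens3 beta (x ++ y) gamma = tens3 beta x gamma ++ tens3 beta y gamma.
Proof. by rewrite /tens3 map_cat. Qed.

Lemma inNn_scale t c x : inNn t x -> inNn t (scale c x).
Proof.
move=> [l [H1 V1]]; exists [seq (p.1.1, scale c p.1.2, p.2) | p <- l]; split.
  by move=> p /mapP [p0 /H1 [HN Hs] ->]; split => //; apply: inN_scale.
move=> w; rewrite coef_scale V1 !coef_vsum big_distrr !big_map /=.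
by apply: eq_bigr => p _; rewrite tens3_scale coef_scale.
Qed.

Lemma inNn_tens3 t beta y gamma : inN y -> (size beta + 2 + size gamma)%N = t ->
  inNn t (tens3 beta y gamma).
Proof.
move=> Hy Ht; exists [:: (beta, y, gamma)]; split.
  by move=> p; rewrite inE => /eqP -> /=.
by move=> w; rewrite /= coef_cat coef_nil addr0.
Qed.

Definition catw (x : Vec) (s : word) : Vec := [seq (p.1, p.2 ++ s) | p <- x].

Lemma catw_cat x y s : catw (x ++ y) s = catw x s ++ catw y s.
Proof. by rewrite /catw map_cat. Qed.

Lemma catw_scale c x s : catw (scale c x) s = scale c (catw x s).
Proof. by rewrite /catw /scale -!map_comp. Qed.

Lemma catwA x s s' : catw (catw x s) s' = catw x (s ++ s').
Proof. by rewrite /catw -map_comp; apply: eq_map => p /=; rewrite catA. Qed.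

Lemma eqseq_cat2r (u v s : word) : (u ++ s == v ++ s) = (u == v).
Proof.
apply/eqP/eqP => [H|->//]; apply: (can_inj revK).
have : rev (u ++ s) == rev (v ++ s) by rewrite H.
by rewrite !rev_cat eqseq_cat ?size_rev // => /andP [_ /eqP].
Qed.

Lemma veq_catw x y s : veq x y -> veq (catw x s) (catw y s).
Proof.
move=> H w; rewrite /coef !big_map.
case: (boolP (suffix s w)) => [/suffixP [u ->]|Hn].
  have E z : \sum_(p <- z | p.2 ++ s == u ++ s) p.1 = coef z u.
    by apply: eq_bigl => p; rewrite eqseq_cat2r.
  by rewrite !E H.
have E z : \sum_(p <- z | p.2 ++ s == w) p.1 = 0.
  by rewrite big_pred0 // => p; apply/negP => /eqP Hw; move: Hn; rewrite -Hw suffix_suffix.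
by rewrite !E.
Qed.

Lemma inNn_catw t x s : inNn t x -> inNn (t + size s) (catw x s).
Proof.
move=> [l [H1 V1]]; exists [seq (p.1.1, p.1.2, p.2 ++ s) | p <- l]; split.
  move=> p /mapP [p0 /H1 [HN Hs] ->] /=; split => //.
  by rewrite size_cat -Hs addnA.
have -> : vsum [seq tens3 p.1.1 p.1.2 p.2 | p <- [seq (p.1.1, p.1.2, p.2 ++ s) | p <- l]]
   = catw (vsum [seq tens3 p.1.1 p.1.2 p.2 | p <- l]) s.
  rewrite -map_comp /vsum /catw map_flatten -map_comp; congr flatten; apply: eq_map => p /=.
  by rewrite /tens3 -map_comp; apply: eq_map => r /=; rewrite -!catA.
exact: veq_catw.
Qed.

Lemma tofr_neq0 p : p.[0] != 0 -> tofr p != 0.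
Proof. by move=> H; rewrite /tofr tofrac_eq0; apply: contraNneq H => ->; rewrite horner0. Qed.

Lemma inA_tofr p : inA (tofr p).
Proof. by exists p, 1; rewrite hornerC oner_eq0 /tofr tofrac1 divr1. Qed.

Lemma inA_add f g : inA f -> inA g -> inA (f + g).
Proof.
move=> [p1 [r1 [H1 ->]]] [p2 [r2 [H2 ->]]].
exists (p1 * r2 + p2 * r1), (r1 * r2); split; first by rewrite hornerM mulf_neq0.
by rewrite /tofr tofracD !tofracM addf_div // -/(tofr _) tofr_neq0.
Qed.

Lemma inA_mul f g : inA f -> inA g -> inA (f * g).
Proof.
move=> [p1 [r1 [H1 ->]]] [p2 [r2 [H2 ->]]].
exists (p1 * p2), (r1 * r2); split; first by rewrite hornerM mulf_neq0.
by rewrite /tofr !tofracM mulf_div.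
Qed.

Lemma inA_opp f : inA f -> inA (- f).
Proof. by move=> [p [r [H ->]]]; exists (- p), r; rewrite /tofr tofracN mulNr. Qed.

Lemma inA_1 : inA 1. Proof. by rewrite -tofrac1; apply: inA_tofr. Qed.

Lemma inA_q : inA q. Proof. exact: inA_tofr. Qed.

Lemma inA_exp f n : inA f -> inA (f ^+ n).
Proof. by move=> H; elim: n => [|n IH]; [apply: inA_1 | rewrite exprS; apply: inA_mul]. Qed.

Lemma inA_int (z : int) : inA z%:~R.
Proof.
have inA_nat (n : nat) : inA n%:R.
  elim: n => [|n IH]; first by rewrite mulr0n -tofrac0; apply: inA_tofr.
  by rewrite mulrS; apply: inA_add => //; apply: inA_1.
by case: z => n; rewrite ?NegzE ?mulrNz -pmulrn //; apply: inA_opp.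
Qed.

Lemma q_neq0 : q != 0.
Proof. by rewrite /q /tofr tofrac_eq0 polyX_eq0. Qed.

Lemma q2B1_neq0 : q ^+ 2 - 1 != 0.
Proof.
have -> : q ^+ 2 - 1 = tofr ('X ^+ 2 - 1) by rewrite /tofr rmorphB rmorphXn rmorph1.
by apply: tofr_neq0; rewrite !hornerE.
Qed.

Lemma qsum2_neq0 : 1 + q ^+ 2 != 0.
Proof.
have -> : 1 + q ^+ 2 = tofr (1 + 'X ^+ 2) by rewrite /tofr rmorphD rmorphXn rmorph1.
by apply: tofr_neq0; rewrite !hornerE.
Qed.

Lemma qsum3_neq0 : 1 + q ^+ 2 + q ^+ 4 != 0.
Proof.
have -> : 1 + q ^+ 2 + q ^+ 4 = tofr (1 + 'X ^+ 2 + 'X ^+ 4).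
  by rewrite /tofr !rmorphD !rmorphXn rmorph1.
by apply: tofr_neq0; rewrite !hornerE.
Qed.

Lemma qsum4_neq0 : 1 + q ^+ 2 + q ^+ 4 + q ^+ 6 != 0.
Proof.
have -> : 1 + q ^+ 2 + q ^+ 4 + q ^+ 6 = tofr (1 + 'X ^+ 2 + 'X ^+ 4 + 'X ^+ 6).
  by rewrite /tofr !rmorphD !rmorphXn rmorph1.
by apply: tofr_neq0; rewrite !hornerE.
Qed.

(** * Computing in N with symbolic coefficients *)

Definition qintF (F : fieldType) (x : F) (n : int) := (x ^ n - x ^ (- n)) / (x - x^-1).

Section QIntegers.
Variables (F : fieldType) (x : F).
Hypotheses (x_neq0 : x != 0) (x2B1_neq0 : x ^+ 2 - 1 != 0).

Lemma qintF1 : qintF x 1 = 1.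
Proof.
apply: divff; have -> : x - x^-1 = (x ^+ 2 - 1) / x by field.
by rewrite mulf_neq0 ?invr_eq0.
Qed.

Lemma qintF2 : qintF x 2 = x + x^-1.
Proof.
rewrite /qintF (_ : x ^ 2%:Z - x ^ (- 2%:Z) = x ^+ 2 - (x ^+ 2)^-1) //.
by field; rewrite x_neq0 -expr2 x2B1_neq0.
Qed.

Lemma qintF3 : qintF x 3 = x ^+ 2 + 1 + (x ^+ 2)^-1.
Proof.
rewrite /qintF (_ : x ^ 3%:Z - x ^ (- 3%:Z) = x ^+ 3 - (x ^+ 3)^-1) //.
by field; rewrite x_neq0 -expr2 x2B1_neq0.
Qed.

End QIntegers.

(* Coefficients are kept as syntax, so that vm_compute can collect the
   coefficients of a vector; each coefficient identity is then proved by
   [field] in an arbitrary field, under the non-vanishing facts above. *)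
Inductive qexpr :=
  | QInt of int | QPow of int | QNum of int
  | QAdd of qexpr & qexpr | QMul of qexpr & qexpr | QInv of qexpr.

Fixpoint qeval (F : fieldType) (x : F) (e : qexpr) : F :=
  match e with
  | QInt z => z%:~R
  | QPow k => x ^ k
  | QNum n => qintF x n
  | QAdd a b => qeval x a + qeval x b
  | QMul a b => qeval x a * qeval x b
  | QInv a => (qeval x a)^-1
  end.

Notation qev := (qeval q).

Lemma qeval_eq e1 e2 :
  (forall (F : fieldType) (x : F), x != 0 -> x ^+ 2 - 1 != 0 -> 1 + x ^+ 2 != 0 ->
     1 + x ^+ 2 + x ^+ 4 != 0 -> 1 + x ^+ 2 + x ^+ 4 + x ^+ 6 != 0 ->
   qeval x e1 = qeval x e2) ->
  qev e1 = qev e2.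
Proof.
by move=> H; apply: H; [apply: q_neq0 | apply: q2B1_neq0 | apply: qsum2_neq0
  | apply: qsum3_neq0 | apply: qsum4_neq0].
Qed.

Definition sVec := seq (qexpr * word).
Definition evalV (v : sVec) : Vec := [seq (qev p.1, p.2) | p <- v].

(* [inord] does not reduce under vm_compute. *)
Definition o1 : 'I_3 := @Ordinal 3 1 isT.
Definition o2 : 'I_3 := @Ordinal 3 2 isT.
Definition sinord (j : nat) : 'I_3 := match j with 1%N => o1 | 2%N => o2 | _ => ord0 end.

Lemma inord_sinord j : inord j = sinord j.
Proof.
case: j => [|[|[|j]]]; apply: val_inj; [by rewrite /= ?inordK..|].
by rewrite /inord val_insubd.
Qed.

Definition se_one (i : bool) (b : bas) : seq (qexpr * bas) :=
  let a := b.1 in let j := nat_of_ord b.2 in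
  if i then
    (if (0 < j)%N then [:: (QNum (3 - j)%N, (a, sinord j.-1))] else [::])
  else
    (if (j < 2)%N then [:: (QNum j.+1, (a + 1, sinord j.+1))] else [::]).

Definition sf_one (i : bool) (b : bas) : seq (qexpr * bas) :=
  let a := b.1 in let j := nat_of_ord b.2 in
  if i then
    (if (j < 2)%N then [:: (QNum j.+1, (a, sinord j.+1))] else [::])
  else
    (if (0 < j)%N then [:: (QNum (3 - j)%N, (a - 1, sinord j.-1))] else [::]).

Fixpoint sactE (i : bool) (w : word) : sVec :=
  match w with
  | [::] => [::]
  | b :: w' => [seq (c.1, c.2 :: w') | c <- se_one i b] ++
               [seq (QMul (QPow (- pair (hcor i) (wt b))) c.1, b :: c.2) | c <- sactE i w']
  end.

Fixpoint sactF (i : bool) (w : word) : sVec :=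
  match w with
  | [::] => [::]
  | b :: w' => [seq (QMul c.1 (QPow (pair (hcor i) (wtw w'))), c.2 :: w') | c <- sf_one i b] ++
               [seq (c.1, b :: c.2) | c <- sactF i w']
  end.

Definition sscale (c : qexpr) (v : sVec) : sVec := [seq (QMul c p.1, p.2) | p <- v].
Definition slinext (F : word -> sVec) (v : sVec) : sVec :=
  flatten [seq sscale p.1 (F p.2) | p <- v].
Definition szz (k : int) (w : word) : sVec := [:: (QInt 1, map (zsh k) w)].
Definition szsum (w : word) : sVec :=
  match w with
  | [:: b1; b2] => [:: (QInt 1, [:: zsh 1 b1; b2]); (QInt 1, [:: b1; zsh 1 b2])]
  | _ => [::]
  end.
Definition sv0v0 : sVec := [:: (QInt 1, [:: (0%R, ord0); (0%R, ord0)])].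

Lemma e_one_eval i b : e_one i b = [seq (qev p.1, p.2) | p <- se_one i b].
Proof. by rewrite /e_one /se_one; case: i; case: ifP => _ //=; rewrite inord_sinord. Qed.

Lemma f_one_eval i b : f_one i b = [seq (qev p.1, p.2) | p <- sf_one i b].
Proof. by rewrite /f_one /sf_one; case: i; case: ifP => _ //=; rewrite inord_sinord. Qed.

Lemma actE_eval i w : actE i w = evalV (sactE i w).
Proof.
elim: w => [//|b w IH] /=; rewrite /evalV map_cat -!map_comp e_one_eval IH -!map_comp.
by congr (_ ++ _); apply: eq_map.
Qed.

Lemma actF_eval i w : actF i w = evalV (sactF i w).
Proof.
elim: w => [//|b w IH] /=; rewrite /evalV map_cat -!map_comp f_one_eval IH -!map_comp.
by congr (_ ++ _); apply: eq_map.
Qed.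

Lemma zsum_eval w : zsum w = evalV (szsum w).
Proof. by case: w => [|b1 [|b2 [|b3 w]]]. Qed.

Lemma scale_eval c x : scale (qev c) (evalV x) = evalV (sscale c x).
Proof. by rewrite /scale /evalV /sscale -!map_comp. Qed.

Lemma linext_eval F sF v : (forall w, F w = evalV (sF w)) ->
  linext F (evalV v) = evalV (slinext sF v).
Proof.
move=> H; elim: v => [//|p v IH].
by rewrite /= linext_cons /= IH H scale_eval /evalV /slinext /= map_cat.
Qed.

Lemma inN_sactE i v : inN (evalV v) -> inN (evalV (slinext (sactE i) v)).
Proof. by rewrite -(linext_eval _ (actE_eval i)); apply: inN_actE. Qed.

Lemma inN_sactF i v : inN (evalV v) -> inN (evalV (slinext (sactF i) v)).
Proof. by rewrite -(linext_eval _ (actF_eval i)); apply: inN_actF. Qed.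

Lemma inN_szshift v : inN (evalV v) -> inN (evalV (slinext (szz 1) v)).
Proof. by rewrite -(@linext_eval (zz 1) (szz 1)) //; apply: inN_zshift. Qed.

Lemma inN_szunshift v : inN (evalV v) -> inN (evalV (slinext (szz (-1)) v)).
Proof. by rewrite -(@linext_eval (zz (-1)) (szz (-1))) //; apply: inN_zunshift. Qed.

Lemma inN_szsum v : inN (evalV v) -> inN (evalV (slinext szsum v)).
Proof. by rewrite -(linext_eval _ zsum_eval); apply: inN_zsum. Qed.

Lemma inN_sscale c v : inN (evalV v) -> inN (evalV (sscale c v)).
Proof. by rewrite -scale_eval; apply: inN_scale. Qed.

Lemma inN_sv0v0 : inN (evalV sv0v0). Proof. exact: inN_v0v0. Qed.

Lemma inN_scat x y : inN (evalV x) -> inN (evalV y) -> inN (evalV (x ++ y)).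
Proof. by rewrite /evalV map_cat; apply: inN_cat. Qed.

Definition scoef (x : sVec) (u : word) : qexpr :=
  foldr QAdd (QInt 0) [seq p.1 | p <- x & p.2 == u].

Definition coef_pairs (x y : sVec) : seq (qexpr * qexpr) :=
  [seq (scoef x u, scoef y u) | u <- undup (map snd (x ++ y))].

Fixpoint all_qev_eq (L : seq (qexpr * qexpr)) : Prop :=
  if L is p :: L then qev p.1 = qev p.2 /\ all_qev_eq L else True.

Lemma coef_evalV x u : coef (evalV x) u = qev (scoef x u).
Proof.
elim: x => [|p x IH]; first by rewrite coef_nil.
by rewrite coef_cons IH /scoef /=; case: ifP => _ //=; rewrite add0r.
Qed.

Lemma scoef_notin x u : u \notin map snd x -> scoef x u = QInt 0.
Proof.
elim: x => [//|p x IH]; rewrite /= inE negb_or => /andP [H1 H2].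
by rewrite /scoef /= eq_sym (negbTE H1) -/(scoef x u) IH.
Qed.

Lemma veq_coef_pairs x y : all_qev_eq (coef_pairs x y) -> veq (evalV x) (evalV y).
Proof.
move=> H w; rewrite !coef_evalV.
case: (boolP (w \in undup (map snd (x ++ y)))) => Hw; last first.
  by move: Hw; rewrite mem_undup map_cat mem_cat negb_or => /andP [H1 H2]; rewrite !scoef_notin.
move: H Hw; rewrite /coef_pairs; elim: (undup _) => [//|u L IHL] /= [Hu HL].
by rewrite inE => /orP [/eqP ->//|]; apply: IHL.
Qed.

Lemma inLat_nil t : inLat t [::].
Proof. by exists [::]. Qed.

Lemma inLat_cat t x y : inLat t x -> inLat t y -> inLat t (x ++ y).
Proof.
move=> [l1 [H1 V1]] [l2 [H2 V2]]; exists (l1 ++ l2); split.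
  by move=> p; rewrite mem_cat => /orP [/H1|/H2].
by move=> w; rewrite !coef_cat V1 V2.
Qed.

Lemma inLat_scale t c x : inA c -> inLat t x -> inLat t (scale c x).
Proof.
move=> Hc [l [H1 V1]]; exists (scale c l); split; last by move=> w; rewrite !coef_scale V1.
by move=> p /mapP [p0 /H1 [HA Hs] ->]; split => //; apply: inA_mul.
Qed.

Lemma inLat_word t w : size w = t -> inLat t [:: (1, w)].
Proof. by move=> Hs; exists [:: (1, w)]; split => // p; rewrite inE => /eqP ->; split; first apply: inA_1. Qed.

Lemma inLat_catw t x s : inLat t x -> inLat (t + size s) (catw x s).
Proof.
move=> [l [H1 V1]]; exists (catw l s); split; last exact: veq_catw.
by move=> p /mapP [p0 /H1 [HA Hs] ->]; rewrite /= size_cat Hs.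
Qed.

Definition inqL (n t : nat) (x : Vec) : Prop :=
  exists y, inLat t y /\ inNn t (x ++ scale (- q ^+ n) y).

Lemma inqL_veq n t x x' : veq x x' -> inqL n t x -> inqL n t x'.
Proof. by move=> H [y [Hy HN]]; exists y; split => //; apply: inNn_veq HN; apply: veq_cat. Qed.

Lemma inqL_nil n t : inqL n t [::].
Proof. by exists [::]; split; [apply: inLat_nil | apply: inNn_nil]. Qed.

Lemma inqL0 t x : inLat t x -> inqL 0 t x.
Proof.
move=> H; exists x; split => //; apply: inNn_veq (inNn_nil t) => w.
by rewrite coef_nil coef_cat coef_scale expr0 mulN1r subrr.
Qed.

Lemma inqL_cat n t x x' : inqL n t x -> inqL n t x' -> inqL n t (x ++ x').
Proof.
move=> [y [Hy HN]] [y' [Hy' HN']]; exists (y ++ y'); split; first exact: inLat_cat.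
by apply: inNn_veq (inNn_cat HN HN') => w; rewrite !(coef_cat, coef_scale); ring.
Qed.

Lemma inqL_scale n t c x : inA c -> inqL n t x -> inqL n t (scale c x).
Proof.
move=> Hc [y [Hy HN]]; exists (scale c y); split; first exact: inLat_scale.
by apply: inNn_veq (inNn_scale c HN) => w; rewrite !(coef_cat, coef_scale); ring.
Qed.

Lemma inqL_scaleq n t x : inqL n t x -> inqL n.+1 t (scale q x).
Proof.
move=> [y [Hy HN]]; exists y; split => //.
by apply: inNn_veq (inNn_scale q HN) => w; rewrite !(coef_cat, coef_scale) exprS; ring.
Qed.

Lemma inqL_modN n t x x' : inNn t (x ++ scale (-1) x') -> inqL n t x' -> inqL n t x.
Proof.
move=> H0 [y [Hy HN]]; exists y; split => //.
by apply: inNn_veq (inNn_cat H0 HN) => w; rewrite !(coef_cat, coef_scale); ring.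
Qed.

Lemma inqL_catw n t x s : inqL n t x -> inqL n (t + size s) (catw x s).
Proof.
move=> [y [Hy HN]]; exists (catw y s); split; first exact: inLat_catw.
by have := inNn_catw s HN; rewrite catw_cat catw_scale.
Qed.

Lemma gsword_S g k len : gsword g k len.+1 = gstate g k :: gsword g (k + 1) len.
Proof.
rewrite /gsword /= addr0 (iotaDl 1 0) -map_comp; congr (_ :: _).
by apply: eq_map => i /=; rewrite PoszD addrA.
Qed.

Lemma size_gsword g k len : size (gsword g k len) = len.
Proof. by rewrite size_map size_iota. Qed.

Lemma gsword_cat g k l1 l2 : gsword g k l1 ++ gsword g (k + l1%:Z) l2 = gsword g k (l1 + l2).
Proof.
elim: l1 k => [|l1 IH] k; first by rewrite addr0.
by rewrite addSn !gsword_S cat_cons -IH -addrA -PoszD add1n.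
Qed.

Lemma inqL_gsword n t g k x l l' : (l <= l')%N ->
  inqL n (t + l) (catw x (gsword g k l)) -> inqL n (t + l') (catw x (gsword g k l')).
Proof.
move=> Hl /(inqL_catw (gsword g (k + l%:Z) (l' - l))).
by rewrite catwA gsword_cat size_gsword -addnA subnKC.
Qed.

Lemma energy_zsh y b : energy (zsh 1 y) b = energy y b - 1.
Proof. by rewrite /energy /zsh /=; ring. Qed.

Lemma odd_abs_succ (m : int) : odd `|m + 1| = ~~ odd `|m|.
Proof.
case: m => n; first by rewrite -PoszD absz_nat addn1 /=.
have -> : Negz n + 1 = - n%:Z by rewrite NegzE -addn1 PoszD opprD addrK.
by rewrite abszN absz_nat NegzE abszN absz_nat /= negbK.
Qed.

Lemma energy_gstate_succ g m : energy (gstate g m) (gstate g (m + 1)) = 1.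
Proof.
case: g => /=; last by rewrite /energy /= inordK.
by rewrite odd_abs_succ; case: (odd `|m|) => /=; rewrite /energy /= ?inordK.
Qed.

(** * Straightening G(b) ⊗ G(b°_m) *)

Definition pairG (b b' : bas) : Vec := [:: (1, [:: b; b'])].

Definition combG (ts : seq (K * bas * bas)) : Vec := [seq (p.1.1, [:: p.1.2; p.2]) | p <- ts].

Definition straight_term g m (e : int) (p : K * bas * bas) : Prop :=
  [/\ inA p.1.1, energy p.2 (gstate g (m + 1)) <= 0 &
      inA (p.1.1 / q) \/ - energy p.2 (gstate g (m + 1)) < e].

Definition straight g m (e : int) (X : Vec) : Prop :=
  exists ts, inN (X ++ scale (-1) (combG ts)) /\ forall p, p \in ts -> straight_term g m e p.

Lemma straight_veq g m e X Y : veq X Y -> straight g m e X -> straight g m e Y.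
Proof. by move=> H [ts [HN HT]]; exists ts; split => //; apply: inN_veq HN; apply: veq_cat. Qed.

Lemma straight_term_mono g m e e' p : e <= e' -> straight_term g m e p -> straight_term g m e' p.
Proof. by move=> He [H1 H2 [H3|H3]]; split => //; [left | right; apply: lt_le_trans He]. Qed.

Lemma straight_mono g m e e' X : e <= e' -> straight g m e X -> straight g m e' X.
Proof. by move=> He [ts [HN HT]]; exists ts; split => // p /HT; apply: straight_term_mono. Qed.

Lemma straight_cat g m e X Y : straight g m e X -> straight g m e Y -> straight g m e (X ++ Y).
Proof.
move=> [t1 [H1 T1]] [t2 [H2 T2]]; exists (t1 ++ t2); split.
  by apply: inN_veq (inN_cat H1 H2) => w; rewrite /combG map_cat !(coef_cat, coef_scale); ring.
by move=> p; rewrite mem_cat => /orP [/T1|/T2].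
Qed.

Lemma straight_scale g m e c X : inA c -> straight g m e X -> straight g m e (scale c X).
Proof.
move=> Hc [ts [HN HT]]; exists [seq (c * p.1.1, p.1.2, p.2) | p <- ts]; split.
  have -> : combG [seq (c * p.1.1, p.1.2, p.2) | p <- ts] = scale c (combG ts).
    by rewrite /combG /scale -!map_comp.
  by apply: inN_veq (inN_scale c HN) => w; rewrite !(coef_cat, coef_scale); ring.
move=> p /mapP [p0 /HT [H1 H2 H3] ->]; split => //=; first exact: inA_mul.
by case: H3 => H3; [left; rewrite -mulrA; apply: inA_mul | right].
Qed.

Lemma straight_term_single g m e p : straight_term g m e p ->
  straight g m e [:: (p.1.1, [:: p.1.2; p.2])].
Proof.
move=> H; exists [:: p]; split; last by move=> p'; rewrite inE => /eqP ->.
by apply: inN_veq inN_nil; apply: veq_sym; apply: veq_subvv.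
Qed.

Lemma straight_term_zsh g m e c b b' : straight_term g m e (c, b, b') ->
  straight_term g m (e + 1) (c, b, zsh 1 b').
Proof.
rewrite /straight_term /= energy_zsh => -[H1 H2 H3]; split => //; first by lia.
by case: H3 => H3; [left | right; lia].
Qed.

Lemma straight_zsum g m e X : straight g m e X -> straight g m (e + 1) (linext zsum X).
Proof.
move=> [ts [HN HT]].
exists (flatten [seq [:: (p.1.1, zsh 1 p.1.2, p.2); (p.1.1, p.1.2, zsh 1 p.2)] | p <- ts]).
split.
  apply: inN_veq (inN_zsum HN); rewrite linext_cat; apply: veq_cat => //.
  apply: veq_trans (linext_scale _ _ _) _; apply: veq_scale.
  elim: ts {HN HT} => [//|p ts IH]; rewrite /= linext_cons.
  by apply: (@veq_cat _ _ [:: _; _]) => //= w; rewrite !coef_cons !mulr1.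
move=> p /flatten_mapP [[[c b] b'] /HT Hp]; rewrite !inE => /orP [] /eqP -> /=.
  by apply: straight_term_mono _ Hp; rewrite lerDl.
exact: straight_term_zsh.
Qed.

Lemma straight_zshift g m e X : straight g m e X -> straight g m (e + 1) (linext (zz 1) X).
Proof.
move=> [ts [HN HT]]; exists [seq (p.1.1, zsh 1 p.1.2, zsh 1 p.2) | p <- ts]; split.
  apply: inN_veq (inN_zshift HN); rewrite linext_cat; apply: veq_cat => //.
  apply: veq_trans (linext_scale _ _ _) _; apply: veq_scale.
  elim: ts {HN HT} => [//|p ts IH]; rewrite /= linext_cons.
  by apply: (@veq_cat _ _ [:: _]) => //= w; rewrite !coef_cons !mulr1.
move=> p /mapP [[[c b] b'] /HT [H1 H2 H3] ->].
by apply: straight_term_zsh; split.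
Qed.

Lemma pairG_zsum a i bm : veq (pairG (a + 1, i) bm)
  (linext zsum (pairG (a, i) bm) ++ scale (-1) (pairG (a, i) (zsh 1 bm))).
Proof.
move=> w; rewrite /= !coef_cons !coef_nil /zsh /=.
by case: (_ == w); case: (_ == w); rewrite ?(mulr1, mulr0); ring.
Qed.

Lemma pairG_zrec a i bm : veq (pairG (a + 2, i) bm)
  (linext zsum (pairG (a + 1, i) bm) ++ scale (-1) (linext (zz 1) (pairG (a, i) bm))).
Proof.
move=> w; rewrite /= !coef_cons !coef_nil /zsh /= -addrA.
by case: (_ == w); case: (_ == w); rewrite ?(mulr1, mulr0); ring.
Qed.

(* The three-term recursion [pairG_zrec] raises the depth by at most one per
   step of z. *)
Lemma straight_shift g m i a : straight g m 0 (pairG (a, i) (gstate g m)) ->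
  forall k : nat, straight g m k (pairG (a + k, i) (gstate g m)).
Proof.
move=> H0.
suff H (k : nat) : straight g m k (pairG (a + k, i) (gstate g m)) /\
           straight g m k.+1 (pairG (a + k.+1, i) (gstate g m)) by move=> k; case: (H k).
elim: k => [|k [IH1 IH2]].
  split; first by rewrite addr0.
  apply: straight_veq (veq_sym (pairG_zsum _ _ _)) _; apply: straight_cat.
    by have := straight_zsum H0; rewrite add0r.
  apply: (straight_term_single (p := (-1 * 1, (a, i), zsh 1 (gstate g m)))).
  split => /=; first by rewrite mulr1; apply: inA_opp; apply: inA_1.
    by rewrite energy_zsh energy_gstate_succ subrr.
  by right; rewrite energy_zsh energy_gstate_succ subrr.
split => //.
have -> : a + k.+2 = (a + k) + 2 by rewrite -addrA -PoszD addn2.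
apply: straight_veq (veq_sym (pairG_zrec _ _ _)) _; apply: straight_cat.
  by have := straight_zsum IH2; rewrite -addrA -!PoszD !addn1.
apply: straight_scale; first by apply: inA_opp; apply: inA_1.
by apply: (straight_mono _ (straight_zshift IH1)); lia.
Qed.

(** * The relations of depth zero *)

(* Inverse q-factorials 1/[n]!; only n <= 4 is needed. *)
Definition qfact_inv (n : nat) : qexpr :=
  let q2 := QAdd (QInt 1) (QPow 2) in
  let q3 := QAdd q2 (QPow 4) in
  let q4 := QAdd q3 (QPow 6) in
  match n with
  | 2 => QMul (QPow 1) (QInv q2)
  | 3 => QMul (QPow 3) (QInv (QMul q2 q3))
  | 4 => QMul (QPow 6) (QInv (QMul (QMul q2 q3) q4))
  | _ => QInt 1
  end%N.

Definition se0 (n : nat) (v : sVec) : sVec :=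
  sscale (qfact_inv n) (iter n (slinext (sactE false)) v).
Definition sf1 (n : nat) (v : sVec) : sVec :=
  sscale (qfact_inv n) (iter n (slinext (sactF true)) v).

Lemma inN_se0 n v : inN (evalV v) -> inN (evalV (se0 n v)).
Proof. by move=> Hv; apply: inN_sscale; elim: n => //= n IH; apply: inN_sactE. Qed.

Lemma inN_sf1 n v : inN (evalV v) -> inN (evalV (sf1 n v)).
Proof. by move=> Hv; apply: inN_sscale; elim: n => //= n IH; apply: inN_sactF. Qed.

(* Every remaining term carries a factor q, so a relation of this shape is
   admissible at depth 0. *)
Definition relation_rhs (b bm : bas) (sts : seq (qexpr * bas * bas)) : sVec :=
  (QInt 1, [:: b; bm]) :: [seq (QMul (QInt (-1)) (QMul (QPow 1) t.1.1), [:: t.1.2; t.2]) | t <- sts].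

Definition terms_ok (bm' : bas) (sts : seq (qexpr * bas * bas)) : Prop :=
  foldr (fun t P => (inA (qev t.1.1) /\ energy t.2 bm' <= 0) /\ P) True sts.

Lemma straight_of_relation g m b bm bm' X sts : gstate g (m + 1) = bm' ->
  inN (evalV X) -> veq (evalV X) (evalV (relation_rhs b bm sts)) ->
  terms_ok bm' sts -> straight g m 0 (pairG b bm).
Proof.
move=> <- HX HE HT; exists [seq (q * qev t.1.1, t.1.2, t.2) | t <- sts]; split.
  apply: inN_veq HX; apply: veq_trans HE _.
  by rewrite /relation_rhs /evalV /pairG /scale /combG /= -!map_comp.
elim: sts {HE} HT => [//|t sts IH] /= [[h1 h2] HT] p.
rewrite inE => /orP [/eqP -> | /(IH HT) //]; split => //=; first exact: inA_mul inA_q h1.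
by left; rewrite mulrC mulKf // q_neq0.
Qed.

Ltac inN_tac := repeat match goal with
  | |- inN (evalV (_ ++ _)) => apply: inN_scat
  | |- inN (evalV (se0 _ _)) => apply: inN_se0
  | |- inN (evalV (sf1 _ _)) => apply: inN_sf1
  | |- inN (evalV (sscale _ _)) => apply: inN_sscale
  | |- inN (evalV (slinext (szz 1) _)) => apply: inN_szshift
  | |- inN (evalV (slinext (szz (-1)) _)) => apply: inN_szunshift
  | |- inN (evalV (slinext szsum _)) => apply: inN_szsum
  | |- inN (evalV sv0v0) => exact: inN_sv0v0
  end.

Ltac inA_tac := repeat first
  [ exact: inA_q | exact: inA_1 | exact: inA_int
  | apply: inA_exp | apply: inA_mul | apply: inA_add | apply: inA_opp ].

Ltac coef_tac := apply: veq_coef_pairs;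
  match goal with |- all_qev_eq ?L =>
    let L' := eval vm_compute in L in change (all_qev_eq L') end;
  cbn [all_qev_eq fst snd]; repeat split; apply: qeval_eq => F x h1 h2 h3 h4 h5 /=;
  rewrite ?qintF1 ?qintF2 ?qintF3 //; rewrite /exprz /=; field;
  try done; repeat (apply/andP; split); try assumption.

Ltac terms_tac := rewrite /terms_ok; cbn [foldr fst snd]; repeat split;
  match goal with
  | |- is_true (energy _ _ <= 0) => vm_compute; reflexivity
  | |- inA _ => rewrite /=; inA_tac
  end.

Tactic Notation "relation" constr(Hsucc) uconstr(X) uconstr(sts) :=
  refine (@straight_of_relation _ _ _ _ _ X sts Hsucc _ _ _);
  [inN_tac | coef_tac | terms_tac].

Definition degree0 (i : 'I_3) (bm : bas) : int := (minn i (2 - bm.2))%:Z + bm.1.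

Lemma ord3P (P : 'I_3 -> Prop) : P ord0 -> P o1 -> P o2 -> forall i, P i.
Proof.
move=> P0 P1 P2 [[|[|[|//]]] Hi].
- by rewrite (_ : Ordinal Hi = ord0) //; apply: val_inj.
- by rewrite (_ : Ordinal Hi = o1) //; apply: val_inj.
- by rewrite (_ : Ordinal Hi = o2) //; apply: val_inj.
Qed.

Lemma straight_degree0_B m i : straight GB m 0 (pairG (degree0 i (0, o1), i) (0, o1)).
Proof.
have Hs : gstate GB (m + 1) = (0, o1) by rewrite /= inord_sinord.
elim/ord3P: i.
- relation Hs (sf1 1 sv0v0) [:: (QMul (QInt (-1)) (QPow 1), (0%R, o1), (0%R, ord0))].
- relation Hs (se0 1 (sf1 1 sv0v0))
    [:: (QAdd (QInt (-1)) (QMul (QInt (-1)) (QPow 2)), (1%R, o2), (0%R, ord0));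
        (QMul (QInt (-1)) (QPow 1), (0%R, o1), (1%R, o1));
        (QAdd (QInt (-1)) (QMul (QInt (-1)) (QPow 2)), (0%R, ord0), (1%R, o2))].
- relation Hs (se0 3 (slinext (szz (-1)) sv0v0))
    [:: (QMul (QInt (-1)) (QPow 1), (0%R, o1), (1%R, o2))].
Qed.

Lemma straight_degree0_A_odd m i : odd `|m| ->
  straight GA m 0 (pairG (degree0 i (0, ord0), i) (0, ord0)).
Proof.
move=> Hm; have Hs : gstate GA (m + 1) = (1, o2) by rewrite /= odd_abs_succ Hm inord_sinord.
elim/ord3P: i.
- relation Hs sv0v0 [::].
- relation Hs (se0 1 sv0v0) [:: (QMul (QInt (-1)) (QPow 1), (0%R, ord0), (1%R, o1))].
- relation Hs (se0 2 sv0v0)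
    [:: (QInt (-1), (1%R, o1), (1%R, o1)); (QMul (QInt (-1)) (QPow 3), (0%R, ord0), (2%R, o2))].
Qed.

Lemma straight_degree0_A_even m i : ~~ odd `|m| ->
  straight GA m 0 (pairG (degree0 i (1, o2), i) (1, o2)).
Proof.
move=> Hm; have Hs : gstate GA (m + 1) = (0, ord0) by rewrite /= odd_abs_succ Hm.
elim/ord3P: i.
- relation Hs (sf1 2 (slinext (szz 1) sv0v0))
    [:: (QMul (QInt (-1)) (QPow 3), (1%R, o2), (1%R, ord0)); (QInt (-1), (1%R, o1), (1%R, o1))].
- relation Hs (se0 2 (sf1 1 sv0v0) ++
               sscale (QInt (-1)) (se0 3 (slinext szsum (slinext (szz (-1)) sv0v0))))
    [:: (QMul (QInt (-1)) (QPow 1), (1%R, o2), (1%R, o1))].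
- relation Hs (se0 4 (slinext (szz (-1)) sv0v0)) [::].
Qed.

Lemma straight_degree0 g m i :
  straight g m 0 (pairG (degree0 i (gstate g m), i) (gstate g m)).
Proof.
case: g => /=; rewrite inord_sinord; last exact: straight_degree0_B.
by case: ifP => Hm; [apply: straight_degree0_A_odd | apply: straight_degree0_A_even; rewrite Hm].
Qed.

Lemma straight_pair g m b : energy b (gstate g m) <= 0 ->
  straight g m (- energy b (gstate g m)) (pairG b (gstate g m)).
Proof.
move=> He; have [k Hk] : exists k : nat, - energy b (gstate g m) = k%:Z.
  by exists `|- energy b (gstate g m)|%N; rewrite gez0_abs // oppr_ge0.
have Eb : b = (degree0 b.2 (gstate g m) + k, b.2).
  by case: b Hk {He} => a i /= <-; rewrite /energy /degree0 /=; congr (_, _); ring.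
by rewrite Hk Eb; apply: straight_shift; apply: straight_degree0.
Qed.

(** * Induction on n and on the depth *)

Lemma inqL_common_gsword (T : eqType) (F : T -> K * word) (ts : seq T) n s g j :
  (forall p, p \in ts -> exists k, inqL n (s + k) (catw [:: F p] (gsword g j k))) ->
  exists k, inqL n (s + k) (catw (map F ts) (gsword g j k)).
Proof.
elim: ts => [|p ts IH] Hts; first by exists 0%N; apply: inqL_nil.
have [k1 H1] := Hts p (mem_head _ _).
have [k2 H2] : exists k2, inqL n (s + k2) (catw (map F ts) (gsword g j k2)).
  by apply: IH => p' Hp'; apply: Hts; rewrite inE Hp' orbT.
exists (maxn k1 k2); rewrite (catw_cat [:: F p]).
by apply: inqL_cat; [apply: inqL_gsword _ H1 | apply: inqL_gsword _ H2];
  rewrite ?leq_maxl ?leq_maxr.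
Qed.

Lemma inqL_of_straight g n m beta b ts :
  inN (pairG b (gstate g m) ++ scale (-1) (combG ts)) ->
  (forall p, p \in ts -> exists k, inqL n (size beta + 2 + k)
     (catw [:: (p.1.1, beta ++ [:: p.1.2; p.2])] (gsword g (m + 1) k))) ->
  exists k, inqL n (size beta + 1 + k) (catw [:: (1, rcons beta b)] (gsword g m k)).
Proof.
move=> HN Hts.
have [k Hk] := @inqL_common_gsword _ (fun p => (p.1.1, beta ++ [:: p.1.2; p.2])) _ _ _ _ _ Hts.
exists k.+1; rewrite (_ : size beta + 1 + k.+1 = size beta + 2 + k)%N; last by lia.
apply: inqL_modN Hk.
have := inNn_tens3 HN (_ : size beta + 2 + size (gsword g (m + 1) k) = _)%N.
rewrite tens3_cat tens3_scale size_gsword => /(_ _ erefl).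
congr (inNn _ (_ ++ scale _ _)).
  by rewrite /= gsword_S -cats1 -catA.
by rewrite /tens3 /combG /catw -!map_comp; apply: eq_map => p /=; rewrite -catA.
Qed.

Definition reaches_qL g n (N : int) : Prop := forall beta m b,
  energy b (gstate g m) <= 0 -> - energy b (gstate g m) <= N ->
  exists k, inqL n (size beta + 1 + k) (catw [:: (1, rcons beta b)] (gsword g m k)).

Lemma reaches_qL0 g N : reaches_qL g 0 N.
Proof.
move=> beta m b _ _; exists 0%N; apply: inqL0.
by rewrite /catw /= cats0; apply: inLat_word; rewrite size_rcons addn1 addn0.
Qed.

Lemma reaches_qL_succ g n N : (forall N' : nat, reaches_qL g n N') ->
  reaches_qL g n.+1 (N - 1) -> reaches_qL g n.+1 N.
Proof.
move=> IHn IHN beta m b He HN.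
have [ts [HR HT]] := straight_pair He.
apply: inqL_of_straight HR _ => -[[c b'] b''] /HT [/= Hc He' Hdepth].
have Eword k : [:: (c, (beta ++ [:: b'; b'']) ++ gsword g (m + 1) k)] =
               scale c (catw [:: (1, rcons (rcons beta b') b'')] (gsword g (m + 1) k)).
  by rewrite /= mulr1 -!cats1 -!catA.
have Esize : (size (rcons beta b') + 1 = size beta + 2)%N by rewrite size_rcons; lia.
case: Hdepth => [Hcq | Hlt].
  have Hd : - energy b'' (gstate g (m + 1)) <= `|- energy b'' (gstate g (m + 1))|%N.
    by rewrite gez0_abs // oppr_ge0.
  have [k Hk] := IHn _ (rcons beta b') (m + 1) b'' He' Hd.
  exists k; rewrite -Esize Eword -[c](divfK q_neq0).
  apply: inqL_veq (veq_scaleA _ _ _) _.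
  by apply: inqL_scale Hcq _; apply: inqL_scaleq.
have [k Hk] : exists k, inqL n.+1 (size (rcons beta b') + 1 + k)
    (catw [:: (1, rcons (rcons beta b') b'')] (gsword g (m + 1) k)).
  apply: IHN => //; move: Hlt HN.
  by set e'' := energy b'' _; set e := energy b _; lia.
by exists k; rewrite -Esize Eword; apply: inqL_scale.
Qed.

Lemma reaches_qL_neg g n N : N < 0 -> reaches_qL g n N.
Proof. by move=> HN0 beta m b He HN; exfalso; lia. Qed.

Lemma reaches_qL_all g n (N : nat) : reaches_qL g n N.
Proof.
elim: n N => [|n IHn] N; first exact: reaches_qL0.
elim: N => [|N IHN]; apply: reaches_qL_succ => //; first exact: reaches_qL_neg.
by rewrite (_ : N.+1%:Z - 1 = N) //; lia.
Qed.

Lemma push_nil g m' t y : push g m' t t y = y.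
Proof. by rewrite /push subnn; elim: y => [//|[c w] y IH] /=; rewrite cats0 IH. Qed.

Unset Implicit Arguments.
Theorem mainTheorem6 (g : gss) (m : int) (b : bas) :
  energy b (gstate g m) <= 0 ->
  forall n : nat, (0 < n)%N -> in_qnL g (m - 1) n 1 (Gvec b).
Proof.
move=> He n _.
have Hd : - energy b (gstate g m) <= `|- energy b (gstate g m)|%N.
  by rewrite gez0_abs // oppr_ge0.
have [k [y [Hy HN]]] := @reaches_qL_all g n _ [::] m b He Hd.
exists [:: (1, (1 + k)%N, y)], (1 + k)%N; split => //; split.
  by move=> p; rewrite inE => /eqP -> /=; split => //; apply: inA_1.
rewrite /= push_nil /push /Gvec /= subrK addKn.
by apply: inNn_veq HN => w; rewrite /= !(coef_cons, coef_cat, coef_scale, coef_nil); ring.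
Qed.
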